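(* Let $F:\mathcal{X}\to\mathcal{X}$ be such that the Koopman operator $\mathcal{K}$ on $\mathcal{H}$ is densely defined, and let $\mathfrak{K}_1,\mathfrak{K}_2,\dots$ be a countable family of kernel functions (i.e. $\mathfrak{K}_j=\mathfrak{K}_{x_j}$ for some $x_j\in\mathcal{X}$) whose linear span is a core of $\mathcal{K}^*$. Let $V_N=\mathrm{span}\{\mathfrak{K}_1,\dots,\mathfrak{K}_N\}$, let $\mathcal{P}_N:\mathcal{H}\to V_N$ be the orthogonal projection and $\mathcal{P}_N^*:V_N\to\mathcal{H}$ the inclusion, so that $$\sigma_{\inf}((\mathcal{K}^*-zI)\mathcal{P}_N^* )=\inf_{0\neq g\in V_N}\frac{\|(\mathcal{K}^*-zI)g\|}{\|g\|}.$$ Then for each $z\in\mathbb{C}$ the quantity $\sigma_{\inf}((\mathcal{K}^*-zI)\mathcal{P}_N^* )$ is non-increasing in $N$, and as $N\to\infty$ the functions $z\mapsto\sigma_{\inf}((\mathcal{K}^*-zI)\mathcal{P}_N^* )$ converge to $z\mapsto\sigma_{\inf}(\mathcal{K}^*-zI)$ uniformly on compact subsets of $\mathbb{C}$.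
   Context: $\mathcal{H}$ is a reproducing kernel Hilbert space (RKHS) of complex-valued functions on a set $\mathcal{X}$ with reproducing kernel $\mathfrak{K}:\mathcal{X}\times\mathcal{X}\to\mathbb{C}$, inner product $\langle\cdot,\cdot\rangle$ (linear in the first argument) and norm $\|\cdot\|$; $\mathfrak{K}_x\in\mathcal{H}$ denotes the kernel function at $x$, so $g(x)=\langle g,\mathfrak{K}_x\rangle$ for all $g\in\mathcal{H}$ and $\mathfrak{K}(x,y)=\langle\mathfrak{K}_x,\mathfrak{K}_y\rangle$. For $F:\mathcal{X}\to\mathcal{X}$ the Koopman operator $\mathcal{K}=\mathcal{K}_F$ on $\mathcal{H}$ is $\mathcal{K}g=g\circ F$ with domain $\{g\in\mathcal{H}:g\circ F\in\mathcal{H}\}$; it is closed. When it is densely defined, its adjoint $\mathcal{K}^*$ (Perron–Frobenius operator) is closed and densely defined, and $\mathfrak{K}_x\in\mathcal{D}(\mathcal{K}^* )$ with $\mathcal{K}^*\mathfrak{K}_x=\mathfrak{K}_{F(x)}$. For an operator $T$ with domain $\mathcal{D}(T)$, the injection modulus is $\sigma_{\inf}(T)=\inf\{\|Tg\|/\|g\|:0\neq g\in\mathcal{D}(T)\}$. A core of a closed operator $T$ is a subspace of $\mathcal{D}(T)$ on which the restriction of $T$ has closure $T$. *)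

From HB Require Import structures.
From mathcomp Require Import all_boot all_order all_algebra.
From mathcomp Require Import all_classical all_reals all_analysis.
From mathcomp Require Export complex.
Import Order.TTheory GRing.Theory Num.Theory.
Import numFieldTopology.Exports numFieldNormedType.Exports.

Set Implicit Arguments.
Unset Strict Implicit.
Unset Printing Implicit Defensive.

Local Open Scope classical_set_scope.
Local Open Scope ring_scope.

(* The usual metric topology on C = R[i] (balls for the modulus), so that
   `compact` makes sense for subsets of C. *)
HB.instance Definition _ (R : rcfType) := PseudoPointedMetric.copy R[i] (R[i])^o.

Section RKHS.
Context {R : realType} {X : Type}.

Local Notation C := R[i].
Local Notation fn := (X -> C).

Definition fzero : fn := fun _ => 0.
Definition fsub (f g : fn) : fn := fun y => f y - g y.
Definition fscale (a : C) (f : fn) : fn := fun y => a * f y.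

Definition hnorm (ip : fn -> fn -> C) (f : fn) : R := Num.sqrt (complex.Re (ip f f)).

(* H (a set of functions X -> C) with inner product ip (linear in the first
   argument) is a Hilbert space, and it is a RKHS whose kernel function at x
   is kf x, i.e. kf x \in H and g x = <g, kf x> for all g in H.
   (The kernel is K(x,y) = <kf x, kf y> = kf x y.) *)
Definition is_RKHS (H : set fn) (ip : fn -> fn -> C) (kf : X -> fn) : Prop :=
      H fzero /\
      (forall f g, H f -> H g -> H (fun y => f y + g y)) /\
      (forall a f, H f -> H (fscale a f)) /\
      (forall a f g h, H f -> H g -> H h ->
         ip (fun y => a * f y + g y) h = a * ip f h + ip g h) /\
      (forall f g, H f -> H g -> ip f g = (ip g f)^*) /\
      (forall f, H f -> 0 <= ip f f) /\ (forall f, H f -> ip f f = 0 -> f = fzero) /\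
      (forall u : nat -> fn, (forall n, H (u n)) ->
         (forall e : R, 0 < e -> exists N, forall m n, (N <= m)%N -> (N <= n)%N ->
            hnorm ip (fsub (u m) (u n)) < e) ->
         exists g, H g /\ (fun n => hnorm ip (fsub (u n) g)) @ \oo --> (0 : R)) /\
      (forall x, H (kf x)) /\
      (forall g x, H g -> g x = ip g (kf x)).

Definition koopman_dom (H : set fn) (F : X -> X) (g : fn) : Prop :=
  H g /\ H (g \o F).

Definition densely_defined (H : set fn) (ip : fn -> fn -> C) (F : X -> X) : Prop :=
  forall h, H h -> forall e : R, 0 < e ->
    exists g, koopman_dom H F g /\ hnorm ip (fsub g h) < e.

(* Graph of the adjoint K^* (Perron--Frobenius operator):
   h \in D(K^* ) and K^* h = w iff <K g, h> = <g, w> for all g \in D(K). *)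
Definition adj_graph (H : set fn) (ip : fn -> fn -> C) (F : X -> X)
    (h w : fn) : Prop :=
  [/\ H h, H w & forall g, koopman_dom H F g -> ip (g \o F) h = ip g w].

(* S is a core of the closed operator with graph T (on the Hilbert space H):
   S is contained in the domain and the closure of the graph of the
   restriction of T to S is the graph of T. *)
Definition is_core (H : set fn) (ip : fn -> fn -> C) (T : fn -> fn -> Prop)
    (S : set fn) : Prop :=
  (forall s, S s -> exists w, T s w) /\
  (forall h w, T h w <->
     (H h /\ H w /\
      exists s v : nat -> fn, (forall n, S (s n) /\ T (s n) (v n)) /\
        (fun n => hnorm ip (fsub (s n) h)) @ \oo --> (0 : R) /\
        (fun n => hnorm ip (fsub (v n) w)) @ \oo --> (0 : R))).

(* V_N = span {kf (x 0), ..., kf (x (N-1))} *)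
Definition kspan (kf : X -> fn) (x : nat -> X) (N : nat) (g : fn) : Prop :=
  exists c : nat -> C, g = fun y => \sum_(j < N) c j * kf (x j) y.

Definition kspan_all (kf : X -> fn) (x : nat -> X) (g : fn) : Prop :=
  exists N, kspan kf x N g.

(* injection modulus of (K^* - z I) restricted to the subspace D of its
   domain: inf { ||(K^* - z) g|| / ||g|| : 0 <> g \in D \cap D(K^* ) },
   as an extended real (inf of the empty set is +oo). *)
Definition sigma_inf_on (H : set fn) (ip : fn -> fn -> C) (F : X -> X)
    (D : set fn) (z : C) : \bar R :=
  ereal_inf [set r | exists g w, [/\ D g, g <> fzero, adj_graph H ip F g w &
     r = (hnorm ip (fsub w (fscale z g)) / hnorm ip g)%:E]].

End RKHS.

(* Restricting K^* - z to a smaller subspace can only raise the infimum of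
   ||(K^* - z) g|| / ||g||, which gives the monotonicity in N and the bound
   sigma_inf(K^* - z) <= sigma_inf((K^* - z) P_N^* ).  Conversely, a g in the
   domain of K^* whose ratio is close to sigma_inf(K^* - z) is, the span of the
   kernel functions being a core, a graph limit of elements s_n of the spaces
   V_N; the ratios of the s_n converge to that of g, which gives pointwise
   convergence.  All these functions of z are 1-Lipschitz, because
   ||(K^* - z) g|| moves by at most |z - z'| ||g||, so pointwise convergence is
   uniform on compact sets. *)

From HB Require Import structures.
From mathcomp Require Import all_boot all_order all_algebra.
From mathcomp Require Import all_classical all_reals all_analysis.
From mathcomp Require Import complex ring lra.
Import Order.TTheory GRing.Theory Num.Theory.
Import numFieldTopology.Exports numFieldNormedType.Exports.
Local Open Scope classical_set_scope.
Local Open Scope ring_scope.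
Local Open Scope complex_scope.
Set Implicit Arguments.
Unset Strict Implicit.

Import Normc.

Lemma near_normcB (R : realType) (z : R[i]) (d : R) : 0 < d ->
  \forall w \near z, normc (z - w) < d.
Proof.
move=> d0.
have := (@cvgrPdist_lt _ (R[i]^o) _ (nbhs z) _ id z).1 (@cvg_id _ (nbhs z)) d%:C.
rewrite ltcR => /(_ _ d0); apply: filterS => w.
by rewrite normc_def ltcR; case: (z - w)%R.
Qed.

Lemma ReD (R : rcfType) (u v : R[i]) : complex.Re (u + v) = complex.Re u + complex.Re v.
Proof. by case: u; case: v. Qed.

Lemma Re_realM (R : rcfType) (t : R) (u : R[i]) : complex.Re (t%:C * u) = t * complex.Re u.
Proof. by case: u => a b /=; rewrite mul0r subr0. Qed.

Lemma ReJ (R : rcfType) (u : R[i]) : complex.Re u^* = complex.Re u.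
Proof. by case: u. Qed.

Lemma kspanS (R : realType) (X : Type) (kf : X -> X -> R[i]) (x : nat -> X) N g :
  kspan kf x N g -> kspan kf x N.+1 g.
Proof.
case=> c ->; exists (fun j => if (j < N)%N then c j else 0).
apply/funext => y; rewrite big_ord_recr /= ltnn mul0r addr0.
by apply: eq_bigr => j _; rewrite ltn_ord.
Qed.

Lemma kspan_le (R : realType) (X : Type) (kf : X -> X -> R[i]) (x : nat -> X) M N g :
  (M <= N)%N -> kspan kf x M g -> kspan kf x N g.
Proof.
move=> /subnK <-; elim: (N - M)%N => // k IH /IH; rewrite addSn; exact: kspanS.
Qed.

Section PreHilbert.
Context {R : realType} {X : Type}.
Local Notation fn := (X -> R[i]).

Definition pre_hilbert (H : set fn) (ip : fn -> fn -> R[i]) : Prop :=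
  H fzero /\
  (forall f g, H f -> H g -> H (fun y => f y + g y)) /\
  (forall a f, H f -> H (fscale a f)) /\
  (forall a f g h, H f -> H g -> H h ->
     ip (fun y => a * f y + g y) h = a * ip f h + ip g h) /\
  (forall f g, H f -> H g -> ip f g = (ip g f)^*) /\
  (forall f, H f -> 0 <= ip f f) /\
  (forall f, H f -> ip f f = 0 -> f = fzero).

Lemma RKHS_pre_hilbert (H : set fn) ip kf : is_RKHS H ip kf -> pre_hilbert H ip.
Proof. by case=> ? [? [? [? [? [? [? _]]]]]]; do !split. Qed.

Variables (H : set fn) (ip : fn -> fn -> R[i]).
Hypothesis hH : pre_hilbert H ip.
Local Notation nrm := (hnorm ip).

Definition reip (f g : fn) : R := complex.Re (ip f g).

Lemma H_fzero : H fzero. Proof. by case: hH. Qed.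

Lemma H_lincomb a f g c : H f -> H g -> (forall y, c y = a * f y + g y) -> H c.
Proof.
case: hH => _ [hD [hZ _]] hf hg hc.
have -> : c = fun y => fscale a f y + g y by apply/funext => y; rewrite hc.
by apply: hD => //; apply: hZ.
Qed.

Lemma H_fsub f g : H f -> H g -> H (fsub f g).
Proof. by move=> hf hg; apply: (H_lincomb (a := -1) hg hf) => y; rewrite mulN1r addrC. Qed.

Lemma H_fscale a f : H f -> H (fscale a f).
Proof. by move=> hf; apply: (H_lincomb hf H_fzero) => y; rewrite /fzero addr0. Qed.

Lemma ip_lincomb a f g h c : H f -> H g -> H h ->
  (forall y, c y = a * f y + g y) -> ip c h = a * ip f h + ip g h.
Proof.
case: hH => _ [_ [_ [hl _]]] hf hg hh hc.
have -> : c = fun y => a * f y + g y by apply/funext => y; rewrite hc.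
exact: hl.
Qed.

Lemma ip_conj f g : H f -> H g -> ip f g = (ip g f)^*.
Proof. by case: hH => _ [_ [_ [_ [hJ _]]]]; apply: hJ. Qed.

Lemma ip_ge0 f : H f -> 0 <= ip f f.
Proof. by case: hH => _ [_ [_ [_ [_ [hp _]]]]]; apply: hp. Qed.

Lemma ip_eq0 f : H f -> ip f f = 0 -> f = fzero.
Proof. by case: hH => _ [_ [_ [_ [_ [_ hd]]]]]; apply: hd. Qed.

Lemma ip0l h : H h -> ip fzero h = 0.
Proof.
move=> hh.
have e : ip fzero h = 1 * ip fzero h + ip fzero h.
  by apply: (ip_lincomb H_fzero H_fzero hh) => y; rewrite /fzero mul1r addr0.
by apply: (@addIr _ (ip fzero h)); rewrite add0r [RHS]e mul1r.
Qed.

Lemma reip_ge0 f : H f -> 0 <= reip f f.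
Proof. by move=> /ip_ge0; rewrite lecE => /andP[]. Qed.

Lemma ip_selfE f : H f -> ip f f = (reip f f)%:C.
Proof. by move=> /ip_ge0 /ger0_Im; rewrite /reip; case: (ip f f) => a b /= ->. Qed.

Lemma reipC f g : H f -> H g -> reip f g = reip g f.
Proof. by move=> hf hg; rewrite /reip ip_conj // ReJ. Qed.

Lemma reip0l g : H g -> reip fzero g = 0.
Proof. by move=> hg; rewrite /reip ip0l. Qed.

Lemma reip_expand (t : R) f g c : H f -> H g -> (forall y, c y = f y + t%:C * g y) ->
  reip c c = reip f f + 2 * t * reip f g + t ^+ 2 * reip g g.
Proof.
move=> hf hg hc.
have hc' y : c y = t%:C * g y + f y by rewrite hc addrC.
have Hc : H c := H_lincomb hg hf hc'.
rewrite /reip (ip_lincomb hg hf Hc hc') ReD Re_realM.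
rewrite (ip_conj hg Hc) (ip_conj hf Hc) !ReJ.
rewrite (ip_lincomb hg hf hg hc') (ip_lincomb hg hf hf hc') !ReD !Re_realM.
rewrite -/(reip g g) -/(reip f g) -/(reip g f) -/(reip f f) (reipC hg hf).
by rewrite /GRing.exp /=; ring.
Qed.

Lemma hnorm_ge0 f : 0 <= nrm f.
Proof. exact: sqrtr_ge0. Qed.

Lemma sqr_hnorm f : H f -> nrm f ^+ 2 = reip f f.
Proof. by move=> hf; rewrite /hnorm sqr_sqrtr // reip_ge0. Qed.

Lemma hnorm0 : nrm fzero = 0.
Proof. by rewrite /hnorm (ip0l H_fzero) /=; exact: sqrtr0. Qed.

Lemma hnorm_eq0 f : H f -> nrm f = 0 -> f = fzero.
Proof.
move=> hf e; apply: ip_eq0 => //.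
by rewrite ip_selfE // -sqr_hnorm // e expr0n.
Qed.

Lemma hnorm_gt0 g : H g -> g <> fzero -> 0 < nrm g.
Proof.
move=> hg gn; rewrite lt_neqAle hnorm_ge0 andbT eq_sym; apply/eqP => e.
exact/gn/hnorm_eq0.
Qed.

Lemma cauchy_schwarz f g : H f -> H g -> reip f g <= nrm f * nrm g.
Proof.
move=> hf hg.
have [f0|f0] := eqVneq (nrm f) 0.
  by rewrite (hnorm_eq0 hf f0) reip0l ?hnorm0 ?mul0r.
have [g0|g0] := eqVneq (nrm g) 0.
  by rewrite (hnorm_eq0 hg g0) (reipC hf H_fzero) reip0l ?hnorm0 ?mulr0.
have fp : 0 < nrm f by rewrite lt_neqAle eq_sym f0 hnorm_ge0.
have gp : 0 < nrm g by rewrite lt_neqAle eq_sym g0 hnorm_ge0.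
(* expand [0 <= ||f + t g||^2] at [t = - ||f|| / ||g||] *)
pose t := - (nrm f / nrm g).
pose c y := f y + t%:C * g y.
have Hc : H c by apply: (H_lincomb hg hf) => y; rewrite addrC.
have := reip_ge0 Hc; rewrite (@reip_expand t f g c hf hg) // -!sqr_hnorm //.
have -> : nrm f ^+ 2 + 2 * t * reip f g + t ^+ 2 * nrm g ^+ 2 =
   (2 * nrm f / nrm g) * (nrm f * nrm g - reip f g).
  by rewrite /t; field; rewrite g0.
by rewrite pmulr_rge0 ?subr_ge0 // divr_gt0 // mulr_gt0.
Qed.

Lemma hnormD_le f g c : H f -> H g -> (forall y, c y = f y + g y) ->
  nrm c <= nrm f + nrm g.
Proof.
move=> hf hg hc.
have hc' y : c y = f y + 1%:C * g y by rewrite hc mul1r.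
have Hc : H c by apply: (H_lincomb (a := 1) hg hf) => y; rewrite hc addrC mul1r.
rewrite -(@ler_pXn2r _ 2) // ?nnegrE ?addr_ge0 ?hnorm_ge0 //.
rewrite sqr_hnorm // (reip_expand hf hg hc') sqrrD !sqr_hnorm //.
have := cauchy_schwarz hf hg; rewrite expr1n !mul1r mulr1 -mulr_natl; lra.
Qed.

Lemma hnormZ a f c : H f -> (forall y, c y = a * f y) -> nrm c = normc a * nrm f.
Proof.
move=> hf hc.
have hc' y : c y = a * f y + fzero y by rewrite hc /fzero addr0.
have Hc : H c := H_lincomb hf H_fzero hc'.
rewrite /hnorm; case: a hc hc' => a1 a2 hc hc' /=.
rewrite -sqrtrM ?addr_ge0 ?sqr_ge0 //; congr Num.sqrt.
rewrite (ip_lincomb hf H_fzero Hc hc') ip0l // addr0 (ip_conj hf Hc).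
rewrite (ip_lincomb hf H_fzero hf hc') ip0l // addr0 ip_selfE //.
by rewrite /GRing.exp /=; ring.
Qed.

Lemma hnorm_distC f g : H f -> H g -> nrm (fsub f g) = nrm (fsub g f).
Proof.
move=> hf hg; rewrite (@hnormZ (-1) (fsub g f)) ?normcN ?normc1 ?mul1r //.
  exact: H_fsub.
by move=> y; rewrite /fsub mulN1r opprB.
Qed.

Lemma ler_dist_hnorm f g : H f -> H g -> `|nrm f - nrm g| <= nrm (fsub f g).
Proof.
move=> hf hg; rewrite ler_norml; apply/andP; split.
  have := @hnormD_le (fsub g f) f g (H_fsub hg hf) hf (fun y => esym (subrK (f y) (g y))).
  rewrite hnorm_distC //; lra.
have := @hnormD_le (fsub f g) g f (H_fsub hf hg) hg (fun y => esym (subrK (g y) (f y))).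
lra.
Qed.

Lemma hnorm_cvg (s : nat -> fn) g : (forall n, H (s n)) -> H g ->
  (fun n => nrm (fsub (s n) g)) @ \oo --> (0 : R) ->
  (fun n => nrm (s n)) @ \oo --> nrm g.
Proof.
move=> hs hg cs; apply/cvgrPdist_lt => e e0.
have := (cvgrPdist_lt (FF:=eventually_filter) _ _).1 cs e e0; apply: filterS => n.
rewrite sub0r normrN ger0_norm ?hnorm_ge0 // distrC.
exact/le_lt_trans/ler_dist_hnorm.
Qed.

Definition residual (z : R[i]) (g w : fn) : R := nrm (fsub w (fscale z g)) / nrm g.

Lemma residual_lipschitz g w z z' : H g -> H w -> 0 < nrm g ->
  residual z g w <= residual z' g w + normc (z - z').
Proof.
move=> hg hw gp.
have e y : fsub w (fscale z g) y = fsub w (fscale z' g) y + fscale (z' - z) g y.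
  by rewrite /fsub /fscale mulrBl addrA subrK.
have := hnormD_le (H_fsub hw (H_fscale z' hg)) (H_fscale _ hg) e.
rewrite (@hnormZ (z' - z) g (fscale (z' - z) g)) // -opprB normcN => le.
by rewrite /residual ler_pdivrMr // mulrDl divfK ?gt_eqF.
Qed.

Lemma residual_cvg (s v : nat -> fn) g w z :
  (forall n, H (s n) /\ H (v n)) -> H g -> H w -> 0 < nrm g ->
  (fun n => nrm (fsub (s n) g)) @ \oo --> (0 : R) ->
  (fun n => nrm (fsub (v n) w)) @ \oo --> (0 : R) ->
  (fun n => residual z (s n) (v n)) @ \oo --> residual z g w.
Proof.
move=> hsv hg hw gp cs cv.
apply: cvgM; last by apply: cvgV; [rewrite gt_eqF | apply: hnorm_cvg => // n; case: (hsv n)].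
apply: hnorm_cvg => [n|| ]; first by case: (hsv n) => hs hv; apply/H_fsub/H_fscale.
  exact/H_fsub/H_fscale.
have tri n : nrm (fsub (fsub (v n) (fscale z (s n))) (fsub w (fscale z g))) <=
    nrm (fsub (v n) w) + normc z * nrm (fsub (s n) g).
  have [hs hv] := hsv n.
  rewrite -normcN -(@hnormZ (- z) (fsub (s n) g) (fscale (- z) (fsub (s n) g))) //;
    last exact: H_fsub.
  by apply: hnormD_le; [exact: H_fsub | exact/H_fscale/H_fsub |
    move=> y; rewrite /fsub /fscale; ring].
apply: (@squeeze_cvgr _ _ _ _ (cst 0)
  (fun n => nrm (fsub (v n) w) + normc z * nrm (fsub (s n) g)) _ _ _ (cvg_cst _)).
  by near=> n; rewrite hnorm_ge0 tri.
have -> : (0 : R) = 0 + normc z * 0 by rewrite mulr0 addr0.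
exact: cvgD cv (cvgM (cvg_cst _) cs).
Unshelve. all: by end_near.
Qed.

Variable F : X -> X.
Local Notation sig := (sigma_inf_on H ip F).

Lemma sigma_inf_on_ge0 D z : (0 <= sig D z)%E.
Proof.
apply: le_ereal_inf_tmp => _ [g [w [_ _ _ ->]]].
by rewrite lee_fin divr_ge0 // hnorm_ge0.
Qed.

Lemma sigma_inf_on_le_residual D g w z : D g -> g <> fzero ->
  adj_graph H ip F g w -> (sig D z <= (residual z g w)%:E)%E.
Proof. by move=> Dg g0 gw; apply: ereal_inf_lbound; exists g, w. Qed.

Lemma sigma_inf_onS (D1 D2 : set fn) z : D1 `&` H `<=` D2 -> (sig D2 z <= sig D1 z)%E.
Proof.
move=> sD; apply: le_ereal_inf_tmp => _ [g [w [D1g g0 gw ->]]].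
by apply: sigma_inf_on_le_residual => //; apply: sD; split => //; case: gw.
Qed.

Lemma sigma_inf_on_lipschitz D z z' : (sig D z <= sig D z' + (normc (z - z'))%:E)%E.
Proof.
rewrite -leeBlDr //; apply: le_ereal_inf_tmp => _ [g [w [Dg g0 gw ->]]].
rewrite leeBlDr // -EFinD; apply: le_trans (sigma_inf_on_le_residual z Dg g0 gw) _.
case: gw => hg hw _; rewrite lee_fin residual_lipschitz //.
exact: hnorm_gt0.
Qed.

Variables (kf : X -> X -> R[i]) (x : nat -> X).
Hypothesis core : is_core H ip (adj_graph H ip F) (kspan_all kf x).

Lemma sigma_inf_kspan_le_residual g w z e : adj_graph H ip F g w -> g <> fzero -> 0 < e ->
  exists M, forall N, (M <= N)%N -> (sig (kspan kf x N) z <= (residual z g w + e)%:E)%E.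
Proof.
move=> gw g0 e0; have [hg hw _] := gw.
have [_ [_ [s [v [ssv [cs cv]]]]]] := (core.2 g w).1 gw.
have hsv n : H (s n) /\ H (v n) by have [_ []] := ssv n.
have gp := hnorm_gt0 hg g0.
have near_res : \forall n \near \oo, residual z (s n) (v n) < residual z g w + e.
  by apply: (cvgr_lt (FF:=eventually_filter) _ (residual_cvg hsv hg hw gp cs cv)); rewrite ltrDl.
have near_pos : \forall n \near \oo, 0 < nrm (s n).
  exact: (cvgr_gt (FF:=eventually_filter) _ (hnorm_cvg (fun n => (hsv n).1) hg cs)).
have [n0 _ /(_ n0 (leqnn n0)) [res_lt s_pos]] := filterI near_res near_pos.
have [[M sM] svn] := ssv n0.
exists M => N MN; apply: le_trans (sigma_inf_on_le_residual z _ _ svn) _.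
- exact: kspan_le sM.
- by move=> s0; move: s_pos; rewrite s0 hnorm0 ltxx.
- by rewrite lee_fin ltW.
Qed.

Lemma sigma_inf_kspan_eventually_le z e : 0 < e ->
  exists M, forall N, (M <= N)%N -> (sig (kspan kf x N) z <= sig H z + e%:E)%E.
Proof.
move=> e0; case E: (sig H z) => [r||]; last first.
- by have := sigma_inf_on_ge0 H z; rewrite E.
- by exists 0%N => N _; rewrite addye ?leey.
have e20 : 0 < e / 2 by rewrite divr_gt0.
have fin : sig H z \is a fin_num by rewrite E.
have [_ [g [w [_ g0 gw ->]]]] := lb_ereal_inf_adherent e20 fin.
rewrite -/(sig H z) E -EFinD lte_fin -/(residual z g w) => res_lt.
have [M hM] := sigma_inf_kspan_le_residual z gw g0 e20.
exists M => N /hM /le_trans; apply; rewrite -EFinD lee_fin; lra.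
Qed.

End PreHilbert.

Lemma compact_eventually_le (R : realType) (A : set R[i])
    (f : nat -> R[i] -> \bar R) (g : R[i] -> \bar R) (e : R) :
  compact A -> 0 < e ->
  (forall N z z', (f N z <= f N z' + (normc (z - z'))%:E)%E) ->
  (forall z z', (g z <= g z' + (normc (z - z'))%:E)%E) ->
  (forall z e, 0 < e -> exists M, forall N, (M <= N)%N -> (f N z <= g z + e%:E)%E) ->
  exists N0, forall N, (N0 <= N)%N -> forall z, A z -> (f N z <= g z + e%:E)%E.
Proof.
move=> cA e0 f_lip g_lip f_le.
have e30 : 0 < e / 3 by rewrite divr_gt0.
suff [N0 _ hN] : \forall N \near \oo, A `<=` (fun z => (f N z <= g z + e%:E)%E).
  by exists N0 => N /hN.
apply: ((compact_near_coveringP A).1 cA nat \oo (fun N z => (f N z <= g z + e%:E)%E)) => z0 Az0.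
have [M hM] := f_le z0 _ e30.
near=> z N.
have dz : normc (z - z0) < e / 3.
  by rewrite -normcN opprB; near: z; exact: near_normcB.
have MN : (M <= N)%N by near: N; exists M.
(* [f N z <= f N z0 + |z - z0| <= g z0 + e/3 + |z - z0| <= g z + e/3 + 2 |z - z0|] *)
apply: (le_trans (f_lip N z z0)).
apply: (le_trans (leeD2r _ (le_trans (hM N MN) (leeD2r _ (g_lip z0 z))))).
rewrite -[normc (z0 - z)]normcN opprB -!addeA -!EFinD leeD2l // lee_fin; lra.
Unshelve. all: by end_near.
Qed.

Theorem mainTheorem2 (R : realType) (X : Type) (H : set (X -> R[i]))
  (ip : (X -> R[i]) -> (X -> R[i]) -> R[i]) (kf : X -> X -> R[i])
  (F : X -> X) (x : nat -> X) :
  is_RKHS H ip kf ->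
  densely_defined H ip F ->
  is_core H ip (adj_graph H ip F) (kspan_all kf x) ->
  (forall (z : R[i]) (N : nat),
     (sigma_inf_on H ip F (kspan kf x N.+1) z <=
      sigma_inf_on H ip F (kspan kf x N) z)%E) /\
  (forall A : set R[i], compact A ->
     forall e : R, 0 < e -> exists N0 : nat, forall N : nat, (N0 <= N)%N ->
       forall z : R[i], A z ->
         (sigma_inf_on H ip F (kspan kf x N) z - e%:E <= sigma_inf_on H ip F H z)%E /\
         (sigma_inf_on H ip F H z <= sigma_inf_on H ip F (kspan kf x N) z + e%:E)%E).
Proof.
move=> /RKHS_pre_hilbert hH _ core; split.
  by move=> z N; apply: sigma_inf_onS => g [/kspanS].
move=> A cA e e0.
have [N0 hN0] := compact_eventually_le cA e0
  (fun N => sigma_inf_on_lipschitz hH F (kspan kf x N)) (sigma_inf_on_lipschitz hH F H)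
  (fun z => sigma_inf_kspan_eventually_le hH core z).
exists N0 => N N0N z Az; split; first by rewrite leeBlDr // hN0.
have sub : kspan kf x N `&` H `<=` H by move=> g [].
apply: le_trans (sigma_inf_onS ip F z sub) _.
by apply: leeDl; rewrite lee_fin ltW.
Qed.
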